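(* Let $n,m\ge1$, $c_1,\dots,c_n>0$, $T>0$, $\epsilon>0$, $\kappa_{ij}\ge0$, $\bar r_1,\dots,\bar r_m>0$ and $R=\prod_{i=1}^m[0,\bar r_i]$. For $r\in R$ let $$C(X,q,r)=\sum_{i,j}\kappa_{ij}x_{ij}+\sum_j\beta_j(q_j)+\epsilon\sum_{i,j}x_{ij}\log\Big(\frac{x_{ij}}{r_i}\Big),$$ where $\beta_j(q_j)=0$ for $q_j\le c_j$ and $\beta_j(q_j)=q_j-c_j-c_j\log(q_j/c_j)$ for $q_j>c_j$, and let $\mathcal{C}(r)$ be the minimum of $C(X,q,r)$ over $(X,q)\in\mathbb{R}^{m\times n}\times\mathbb{R}^n$ satisfying $x_{ij}\ge0$, $\sum_jx_{ij}=r_i$ for all $i$, and $\sum_ix_{ij}=q_j/T$ for all $j$. Then $\mathcal{C}$ is convex on $R$.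
   Context: Conventions: $0\log0=0$ and terms with $x_{ij}=0$ (in particular all terms with $r_i=0$, which force $x_{ij}=0$) contribute zero to the entropy term; equivalently the entropy term is $\epsilon\sum_i r_i\sum_j\delta_{ij}\log\delta_{ij}$ with $\delta_{ij}=x_{ij}/r_i$. *)

From mathcomp Require Import all_boot all_order all_algebra.
From mathcomp Require Import all_classical all_reals all_analysis.
Import Order.TTheory GRing.Theory Num.Theory.
Local Open Scope ring_scope.
Local Open Scope classical_set_scope.

Definition beta {R : realType} (c q : R) : R :=
  if q <= c then 0 else q - c - c * ln (q / c).

Definition xlogxr {R : realType} (x r : R) : R :=
  if x == 0 then 0 else x * ln (x / r).

Definition cost {R : realType} {m n : nat} (kappa : 'M[R]_(m, n))
  (c : 'I_n -> R) (eps : R) (X : 'M[R]_(m, n)) (q : 'I_n -> R)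
  (r : 'I_m -> R) : R :=
  \sum_(i < m) \sum_(j < n) kappa i j * X i j
  + \sum_(j < n) beta (c j) (q j)
  + eps * \sum_(i < m) \sum_(j < n) xlogxr (X i j) (r i).

Definition feasible {R : realType} {m n : nat} (T : R)
  (X : 'M[R]_(m, n)) (q : 'I_n -> R) (r : 'I_m -> R) : Prop :=
  (forall i j, 0 <= X i j) /\
  (forall i, \sum_(j < n) X i j = r i) /\
  (forall j, \sum_(i < m) X i j = q j / T).

(* \mathcal C(r): the minimum (= infimum, which is attained) of C over the
   feasible set *)
Definition optcost {R : realType} {m n : nat} (kappa : 'M[R]_(m, n))
  (c : 'I_n -> R) (T eps : R) (r : 'I_m -> R) : R :=
  inf [set v | exists (X : 'M[R]_(m, n)) (q : 'I_n -> R),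
                 @feasible R m n T X q r /\ v = @cost R m n kappa c eps X q r].

Definition inbox {R : realType} {m : nat} (rbar : 'I_m -> R) (r : 'I_m -> R) : Prop :=
  forall i, 0 <= r i <= rbar i.

(* The constraints are linear in (X, q, r) and the cost C is jointly convex
   in (X, q, r): the transport term is linear, each beta_j is convex since it
   has a supporting line at every point, and the entropy summands x log (x/r)
   are perspectives of x log x, hence positively homogeneous and subadditive
   (the log-sum inequality).  So a convex combination of near-optimal feasible
   pairs for r1 and r2 is feasible for the combined r, with cost at most the
   combination of their costs; as C >= - eps * n * sum_i r_i on the feasible
   set, the infima exist and the convexity inequality passes to them. *)

From mathcomp Require Import all_boot all_order all_algebra.
From mathcomp Require Import all_classical all_reals all_analysis.
From mathcomp Require Import ring lra.
Import Order.TTheory GRing.Theory Num.Theory.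
Local Open Scope ring_scope.
Local Open Scope classical_set_scope.

Section RealInequalities.
Context {R : realType}.

Lemma ln_le_subr1 {u : R} : 0 < u -> ln u <= u - 1.
Proof.
move=> u0; have := @le_ln1Dx R (u - 1).
by rewrite subrKC; apply; lra.
Qed.

Lemma xlogxr_ge_tangent {a b A B : R} : 0 <= a -> a <= b -> 0 < A -> 0 < B ->
  a * ln (A / B) + a - b * (A / B) <= xlogxr a b.
Proof.
move=> a0 ab A0 B0; have AB0 : 0 < A / B by exact: divr_gt0.
rewrite /xlogxr; case: eqP => [->|/eqP an0].
  by rewrite !mul0r !add0r oppr_le0 mulr_ge0 ?(le_trans a0 ab) // ltW.
have ap : 0 < a by rewrite lt_neqAle eq_sym an0.
have bp : 0 < b by exact: lt_le_trans ab.
have ab0 : 0 < a / b by exact: divr_gt0.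
(* [ln u <= u - 1] at [u = (A/B) / (a/b)], multiplied by [a]. *)
have := ler_wpM2l (ltW ap) (ln_le_subr1 (divr_gt0 AB0 ab0)).
have -> : a * ((A / B) / (a / b) - 1) = b * (A / B) - a by field; lra.
rewrite [ln (_ / (_ / _))]ln_div ?posrE // mulrBr.
lra.
Qed.

Lemma xlogxr_ge {a b : R} : 0 <= a -> a <= b -> a - b <= xlogxr a b.
Proof.
move=> a0 ab; have := xlogxr_ge_tangent a0 ab ltr01 ltr01.
by rewrite divr1 ln1 mulr0 add0r mulr1.
Qed.

Lemma xlogxrD_le (a1 b1 a2 b2 : R) :
  0 <= a1 -> a1 <= b1 -> 0 <= a2 -> a2 <= b2 ->
  xlogxr (a1 + a2) (b1 + b2) <= xlogxr a1 b1 + xlogxr a2 b2.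
Proof.
move=> a10 ab1 a20 ab2.
have [A0|Ap] : a1 + a2 = 0 \/ 0 < a1 + a2.
  by case: (ltrgtP (a1 + a2) 0) => h; [lra|right|left].
  have -> : a1 = 0 by lra.
  have -> : a2 = 0 by lra.
  by rewrite /xlogxr addr0 eqxx.
have Bp : 0 < b1 + b2 by lra.
(* Log-sum inequality: add the tangent bounds at the common ratio
   [(a1 + a2) / (b1 + b2)]. *)
have h1 := xlogxr_ge_tangent a10 ab1 Ap Bp.
have h2 := xlogxr_ge_tangent a20 ab2 Ap Bp.
have e : b1 * ((a1 + a2) / (b1 + b2)) + b2 * ((a1 + a2) / (b1 + b2)) = a1 + a2.
  by field; lra.
rewrite {1}/xlogxr gt_eqF //.
lra.
Qed.

Lemma xlogxrZ (t x r : R) : 0 <= t -> xlogxr (t * x) (t * r) = t * xlogxr x r.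
Proof.
rewrite le_eqVlt => /orP[/eqP<-|tp]; first by rewrite !mul0r /xlogxr eqxx.
rewrite /xlogxr mulf_eq0 gt_eqF //=; case: eqP => _; first by rewrite mulr0.
by rewrite invfM mulrACA mulfV ?gt_eqF // mul1r mulrA.
Qed.

Lemma convex_from_support (f g : R -> R) :
  (forall z y, f z + g z * (y - z) <= f y) ->
  forall x y t, 0 <= t <= 1 -> f (t * x + (1 - t) * y) <= t * f x + (1 - t) * f y.
Proof.
move=> supp x y t /andP[t0 t1]; set z := t * x + (1 - t) * y.
have hx := ler_wpM2l t0 (supp z x).
have t1' : 0 <= 1 - t by lra.
have hy := ler_wpM2l t1' (supp z y).
have e : t * (f z + g z * (x - z)) + (1 - t) * (f z + g z * (y - z)) = f z.
  by rewrite /z; ring.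
lra.
Qed.

Lemma beta_ge0 (c q : R) : 0 < c -> 0 <= beta c q.
Proof.
move=> c0; rewrite /beta; case: (lerP q c) => // cq.
have qp : 0 < q by exact: lt_trans c0 cq.
have := ler_wpM2l (ltW c0) (ln_le_subr1 (divr_gt0 qp c0)).
have -> : c * (q / c - 1) = q - c by field; lra.
lra.
Qed.

Definition beta_slope (c z : R) : R := if z <= c then 0 else 1 - c / z.

Lemma beta_support (c z y : R) : 0 < c ->
  beta c z + beta_slope c z * (y - z) <= beta c y.
Proof.
move=> c0; rewrite /beta_slope {1}/beta; case: (lerP z c) => zc.
  by rewrite mul0r addr0; apply: beta_ge0.
have zp : 0 < z by exact: lt_trans c0 zc.
rewrite ln_div ?posrE //.
have e : z - c - c * (ln z - ln c) + (1 - c / z) * (y - z) =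
   y - c * ln z + c * ln c - c * (y / z) by field; lra.
rewrite e /beta; case: (lerP y c) => yc.
  have := ler_wpM2l (ltW c0) (ln_le_subr1 (divr_gt0 c0 zp)).
  rewrite ln_div ?posrE //.
  have h2 : 0 <= (c - y) * (1 - c / z).
    by apply: mulr_ge0; [lra | rewrite subr_ge0 ler_pdivrMr // mul1r; lra].
  have e2 : c * (c / z - 1) = c * (c / z) - c by ring.
  have e3 : (c - y) * (1 - c / z) = c - c * (c / z) - y + c * (y / z) by ring.
  lra.
have yp : 0 < y by exact: lt_trans c0 yc.
have := ler_wpM2l (ltW c0) (ln_le_subr1 (divr_gt0 yp zp)).
rewrite !ln_div ?posrE //.
have e2 : c * (y / z - 1) = c * (y / z) - c by ring.
lra.
Qed.

Lemma beta_convex (c q1 q2 t : R) : 0 < c -> 0 <= t <= 1 ->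
  beta c (t * q1 + (1 - t) * q2) <= t * beta c q1 + (1 - t) * beta c q2.
Proof. by move=> c0; apply: convex_from_support => z y; apply: beta_support. Qed.

Lemma inf_le_convex_comb (A B C : set R) (t : R) :
  A !=set0 -> has_lbound A -> B !=set0 -> has_lbound B -> has_lbound C ->
  0 <= t <= 1 ->
  (forall a b, A a -> B b -> exists2 v, C v & v <= t * a + (1 - t) * b) ->
  inf C <= t * inf A + (1 - t) * inf B.
Proof.
move=> A0 Alb B0 Blb Clb /andP[t0 t1] comb.
apply/ler_addgt0Pr => d d0.
have [a Aa ad] := inf_adherent d0 (conj A0 Alb).
have [b Bb bd] := inf_adherent d0 (conj B0 Blb).
have [v Cv vab] := comb a b Aa Bb.
have Cinf := ge_inf Clb Cv.
have t1' : 0 <= 1 - t by lra.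
have := ler_wpM2l t0 (ltW ad); have := ler_wpM2l t1' (ltW bd); lra.
Qed.

End RealInequalities.

Section OptimalCost.
Context {R : realType} {m n : nat} {c : 'I_n -> R} {T eps : R}
  {kappa : 'M[R]_(m, n)}.
Implicit Types (X : 'M[R]_(m, n)) (q : 'I_n -> R) (r : 'I_m -> R).

Definition feasible_costs r : set R :=
  [set v | exists X q, feasible T X q r /\ v = cost kappa c eps X q r].

Lemma optcostE r : optcost kappa c T eps r = inf (feasible_costs r).
Proof. by []. Qed.

Lemma feasible_le_row {X q r} : feasible T X q r -> forall i j, X i j <= r i.
Proof.
move=> [X_ge0 [rowX _]] i j; rewrite -rowX (bigD1 j) //= lerDl.
exact: sumr_ge0.
Qed.

Lemma feasible_uniform r : (0 < n)%N -> T != 0 -> (forall i, 0 <= r i) ->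
  feasible T (\matrix_(i < m, j < n) (r i / n%:R))
    (fun j => T * \sum_(i < m) r i / n%:R) r.
Proof.
move=> n_gt0 T0 r_ge0; have n0 : n%:R != 0 :> R by rewrite pnatr_eq0 -lt0n.
split; [|split] => [i j|i|j].
- by rewrite mxE divr_ge0.
- under eq_bigr do rewrite mxE.
  by rewrite sumr_const card_ord -[_ *+ n]mulr_natr divfK.
- under eq_bigr do rewrite mxE.
  by rewrite mulrAC divff ?mul1r.
Qed.

Lemma feasible_costs_neq0 r : (0 < n)%N -> T != 0 -> (forall i, 0 <= r i) ->
  feasible_costs r !=set0.
Proof.
by move=> n_gt0 T0 r_ge0; eexists; do 2!eexists; split; first exact: feasible_uniform.
Qed.

Hypotheses (c_gt0 : forall j, 0 < c j) (eps_ge0 : 0 <= eps)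
  (kappa_ge0 : forall i j, 0 <= kappa i j).

Lemma cost_ge X q r : feasible T X q r ->
  - (eps * \sum_(i < m) \sum_(j < n) r i) <= cost kappa c eps X q r.
Proof.
move=> fX; have [X_ge0 _] := fX.
have transport_ge0 : 0 <= \sum_(i < m) \sum_(j < n) kappa i j * X i j.
  by do 2!(apply: sumr_ge0 => ? _); apply: mulr_ge0.
have beta_sum_ge0 : 0 <= \sum_(j < n) beta (c j) (q j).
  by apply: sumr_ge0 => j _; apply: beta_ge0.
have entropy_ge : - \sum_(i < m) \sum_(j < n) r i <=
    \sum_(i < m) \sum_(j < n) xlogxr (X i j) (r i).
  rewrite -sumrN; apply: ler_sum => i _; rewrite -sumrN; apply: ler_sum => j _.
  have := xlogxr_ge (X_ge0 i j) (feasible_le_row fX i j); have := X_ge0 i j; lra.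
rewrite /cost -mulrN; have := ler_wpM2l eps_ge0 entropy_ge; lra.
Qed.

Lemma feasible_costs_lbound r : has_lbound (feasible_costs r).
Proof.
by eexists => _ [X [q [fX ->]]]; apply: cost_ge fX.
Qed.

Section Mixture.
Context {t : R} {X1 X2 : 'M[R]_(m, n)} {q1 q2 : 'I_n -> R} {r1 r2 : 'I_m -> R}.
Hypotheses (t01 : 0 <= t <= 1)
  (fX1 : feasible T X1 q1 r1) (fX2 : feasible T X2 q2 r2).

Let Xt := t *: X1 + (1 - t) *: X2.
Let qt j := t * q1 j + (1 - t) * q2 j.
Let rt i := t * r1 i + (1 - t) * r2 i.

Let t_ge0 : 0 <= t. Proof. by case/andP: t01. Qed.
Let t1_ge0 : 0 <= 1 - t. Proof. by case/andP: t01; rewrite subr_ge0. Qed.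

Lemma feasible_mix : feasible T Xt qt rt.
Proof.
have [X1_ge0 [row1 col1]] := fX1; have [X2_ge0 [row2 col2]] := fX2.
split; [|split] => [i j|i|j].
- by rewrite !mxE addr_ge0 ?mulr_ge0.
- by under eq_bigr do rewrite !mxE; rewrite big_split -!mulr_sumr row1 row2.
- under eq_bigr do rewrite !mxE; rewrite big_split -!mulr_sumr col1 col2.
  by rewrite /qt [RHS]mulrDl !mulrA.
Qed.

Lemma cost_mix : cost kappa c eps Xt qt rt <=
  t * cost kappa c eps X1 q1 r1 + (1 - t) * cost kappa c eps X2 q2 r2.
Proof.
have transportE : \sum_(i < m) \sum_(j < n) kappa i j * Xt i j =
    t * \sum_(i < m) \sum_(j < n) kappa i j * X1 i j +
    (1 - t) * \sum_(i < m) \sum_(j < n) kappa i j * X2 i j.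
  rewrite !mulr_sumr -big_split; apply: eq_bigr => i _.
  rewrite !mulr_sumr -big_split; apply: eq_bigr => j _.
  by rewrite !mxE mulrDr !mulrA [kappa i j * t]mulrC [kappa i j * (1 - t)]mulrC.
have beta_le : \sum_(j < n) beta (c j) (qt j) <=
    t * \sum_(j < n) beta (c j) (q1 j) + (1 - t) * \sum_(j < n) beta (c j) (q2 j).
  by rewrite !mulr_sumr -big_split; apply: ler_sum => j _; apply: beta_convex.
have entropy_le : \sum_(i < m) \sum_(j < n) xlogxr (Xt i j) (rt i) <=
    t * \sum_(i < m) \sum_(j < n) xlogxr (X1 i j) (r1 i) +
    (1 - t) * \sum_(i < m) \sum_(j < n) xlogxr (X2 i j) (r2 i).
  rewrite !mulr_sumr -big_split; apply: ler_sum => i _.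
  rewrite !mulr_sumr -big_split; apply: ler_sum => j _.
  have [[X1_ge0 _] [X2_ge0 _]] := (fX1, fX2).
  rewrite !mxE /rt -(xlogxrZ _ _ _ t_ge0) -(xlogxrZ _ _ _ t1_ge0).
  apply: xlogxrD_le; rewrite ?mulr_ge0 //.
  - apply: ler_wpM2l; [exact: t_ge0 | exact: feasible_le_row fX1 i j].
  - apply: ler_wpM2l; [exact: t1_ge0 | exact: feasible_le_row fX2 i j].
rewrite /cost; have := ler_wpM2l eps_ge0 entropy_le; lra.
Qed.

End Mixture.
End OptimalCost.

Theorem proposition4 (R : realType) (n m : nat) (hn : (1 <= n)%N) (hm : (1 <= m)%N)
  (c : 'I_n -> R) (hc : forall j, 0 < c j) (T : R) (hT : 0 < T)
  (eps : R) (heps : 0 < eps) (kappa : 'M[R]_(m, n))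
  (hkappa : forall i j, 0 <= kappa i j)
  (rbar : 'I_m -> R) (hrbar : forall i, 0 < rbar i) :
  forall (r1 r2 : 'I_m -> R) (t : R),
    inbox rbar r1 -> inbox rbar r2 -> 0 <= t <= 1 ->
    optcost kappa c T eps (fun i => t * r1 i + (1 - t) * r2 i)
      <= t * optcost kappa c T eps r1 + (1 - t) * optcost kappa c T eps r2.
Proof.
move=> r1 r2 t box1 box2 t01.
have r_ge0 r : inbox rbar r -> forall i, 0 <= r i by move=> box i; case/andP: (box i).
have lb := feasible_costs_lbound (T := T) hc (ltW heps) hkappa.
rewrite !optcostE; apply: inf_le_convex_comb.
- exact: feasible_costs_neq0 hn (lt0r_neq0 hT) (r_ge0 _ box1).
- exact: lb.
- exact: feasible_costs_neq0 hn (lt0r_neq0 hT) (r_ge0 _ box2).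
- exact: lb.
- exact: lb.
- exact: t01.
- move=> _ _ [X1 [q1 [fX1 ->]]] [X2 [q2 [fX2 ->]]].
  eexists; last exact (cost_mix hc (ltW heps) t01 fX1 fX2).
  by do 2!eexists; split; first exact: feasible_mix t01 fX1 fX2.
Qed.
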